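(* Let $d\ge 2$ and $t\ge 1$ be integers. Let $v_1,\ldots,v_d$ be pairwise different positive real numbers and $\alpha_1,\ldots,\alpha_{t+d-1}$ pairwise different nonnegative integers, and let $V\in\mathbb{R}^{(t+d-1)\times d}$ be the matrix with entries $V_{j,i}=v_i^{\alpha_j}$. Let $n=\binom{t+d-1}{d-1}$ and let $Q\in\mathbb{R}^{n\times d}$ be the matrix whose rows are indexed by the $(d-1)$-element subsets $S\subset\{1,\ldots,t+d-1\}$ and whose columns are indexed by $i\in\{1,\ldots,d\}$, with entry $Q_{S,i}$ equal to the minor of $V$ formed by the rows in $S$ and the columns in $\{1,\ldots,d\}\setminus\{i\}$. Denote the rows of $Q$ by $Q_1,\ldots,Q_n$ and let $x\in\mathbb{R}^d$ be a vector of unknowns. Then $\{(Q_jx)^t\}_{j=1}^n$ is a basis of $\mathrm{Hom}_t(\mathbb{R}^d)$.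
   Context: $\mathrm{Hom}_t(\mathbb{R}^d)$ denotes the real vector space of homogeneous polynomials of degree $t$ in $d$ real variables (together with the zero polynomial); its dimension is $\binom{t+d-1}{d-1}$. *)

From HB Require Import structures.
From mathcomp Require Import all_boot all_order all_algebra.
Set Implicit Arguments. Unset Strict Implicit. Unset Printing Implicit Defensive.
Import Order.TTheory GRing.Theory Num.Theory.
Local Open Scope ring_scope.

Definition gvandermonde (R : nzRingType) (m d : nat) (v : 'I_d -> R)
  (alpha : 'I_m -> nat) : 'M[R]_(m, d) :=
  \matrix_(j < m, i < d) v i ^+ alpha j.

(* Rows beyond #|S| (never used when #|S| = d-1) are filled with 0. *)
Definition sub_rows_cols (R : nzRingType) (m d : nat) (V : 'M[R]_(m, d))
  (S : {set 'I_m}) (i : 'I_d) : 'M[R]_(d.-1) :=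
  \matrix_(k < d.-1, l < d.-1)
     match nth None (map Some (enum S)) k with
     | Some j => V j (lift i l)
     | None => 0
     end.

Definition Qentry (R : comNzRingType) (m d : nat) (V : 'M[R]_(m, d))
  (S : {set 'I_m}) (i : 'I_d) : R :=
  \det (sub_rows_cols V S i).

Definition Qpow (R : comNzRingType) (m d t : nat) (V : 'M[R]_(m, d))
  (S : {set 'I_m}) : ('I_d -> R) -> R :=
  fun x => (\sum_(i < d) Qentry V S i * x i) ^+ t.

Definition monom (R : comNzRingType) (d t : nat) (e : {ffun 'I_d -> 'I_t.+1})
  (x : 'I_d -> R) : R := \prod_(i < d) x i ^+ e i.

Definition inHom (R : comNzRingType) (d t : nat) (p : ('I_d -> R) -> R) : Prop :=
  exists c : {ffun 'I_d -> 'I_t.+1} -> R,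
    forall x, p x = \sum_(e : {ffun 'I_d -> 'I_t.+1} | (\sum_(i < d) (e i : nat) == t)%N)
                      c e * monom e x.

Definition is_basis_Hom (R : comNzRingType) (d t m k : nat)
  (f : {set 'I_m} -> ('I_d -> R) -> R) : Prop :=
  [/\ (forall S : {set 'I_m}, #|S| = k -> inHom t (f S)),
      (forall c : {set 'I_m} -> R,
         (forall x, \sum_(S : {set 'I_m} | #|S| == k) c S * f S x = 0) ->
         forall S : {set 'I_m}, #|S| = k -> c S = 0)
    & (forall p, inHom t p ->
         exists c : {set 'I_m} -> R,
           forall x, p x = \sum_(S : {set 'I_m} | #|S| == k) c S * f S x)].

From HB Require Import structures.
From mathcomp Require Import all_boot all_order all_algebra.
From mathcomp Require Import polyorder polyrcf ring zify.
Import Order.TTheory GRing.Theory Num.Theory.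
Local Open Scope ring_scope.

(* Any d distinct rows of V form a generalized Vandermonde matrix with positive
   nodes, which is nonsingular: a nonzero polynomial with d monomials has fewer
   than d positive roots (Rolle).  Let l_S(x) = Q_S x and let w_j be row j of V
   with alternating signs; by Laplace expansion, l_S(w_j) is up to sign the
   determinant of the rows S and j of V, so it vanishes iff j \in S.  Applying
   to a relation sum_S c_S l_S^t = 0 the t-fold finite difference in the
   directions w_j, j \notin T, kills every term but c_T t! prod_j l_T(w_j), so
   c_T = 0.  The binomial(t+d-1, d-1) powers l_S^t are thus independent in
   Hom_t, whose dimension is the same, hence they form a basis. *)

Section SparsePoly.
Variable R : rcfType.
Implicit Types (l : seq (R * nat)) (p : {poly R}).

Definition sparse_poly l : {poly R} := \sum_(c <- l) c.1 *: 'X^(c.2).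

Definition sparse_shift a l := [seq (c.1, c.2 - a)%N | c <- l].

Definition sparse_deriv l := [seq (c.1 * c.2%:R, c.2.-1) | c <- l & c.2 != 0%N].

Lemma sparse_poly_shift {a l} : all (fun c => a <= c.2)%N l ->
  sparse_poly l = 'X^a * sparse_poly (sparse_shift a l).
Proof.
move=> /allP la; rewrite /sparse_poly big_map mulr_sumr.
by apply: eq_big_seq => c cl; rewrite -scalerAr -exprD subnKC ?la.
Qed.

Lemma uniq_sparse_shift a l : all (fun c => a <= c.2)%N l ->
  uniq (map snd l) -> uniq (map snd (sparse_shift a l)).
Proof.
move=> /allP la ul; rewrite -map_comp (map_comp (subn^~ a) snd) map_inj_in_uniq //.
move=> b b' /mapP[c cl ->] /mapP[c' c'l ->] /=.
by have := la c cl; have := la c' c'l; lia.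
Qed.

Lemma deriv_sparse_poly l : (sparse_poly l)^`() = sparse_poly (sparse_deriv l).
Proof.
rewrite /sparse_poly big_map big_filter raddf_sum [RHS]big_mkcond /=.
apply: eq_bigr => c _; rewrite derivZ derivXn.
case: (c.2 =P 0%N) => [->|_] /=; first by rewrite mulr0n scaler0.
by rewrite -scaler_nat scalerA mulr_natr.
Qed.

Lemma uniq_sparse_deriv l : uniq (map snd l) -> uniq (map snd (sparse_deriv l)).
Proof.
move=> ul; have -> :
    map snd (sparse_deriv l) = map predn (filter (predC1 0%N) (map snd l)).
  by rewrite filter_map -!map_comp.
rewrite map_inj_in_uniq ?filter_uniq // => b b'; rewrite !mem_filter /=.
by move=> /andP[b0 _] /andP[b'0 _]; lia.
Qed.

Lemma size_sparse_deriv l : uniq (map snd l) -> 0%N \in map snd l ->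
  size (sparse_deriv l) = (size l).-1.
Proof.
move=> ul l0; rewrite size_map size_filter.
have one0 : count (fun c => c.2 == 0%N) l = 1%N.
  by rewrite -(count_map snd (pred1 0%N)) count_uniq_mem ?l0.
by rewrite -[size l](count_predC (fun c : R * nat => c.2 == 0%N)) one0.
Qed.

Lemma poly_rolle_sorted {p x s} :
  sorted <%R (x :: s) -> all (root p) (x :: s) ->
  exists2 s', size s' = size s &
    [/\ sorted <%R s', all (fun z => x < z) s' & all (root p^`()) s'].
Proof.
elim: s x => [|y s IH] x /=; first by exists [::].
move=> /andP[xy sys] /and3P[px py ps].
have [s' sz' [so' ys' rs']] := IH y sys (introT andP (conj py ps)).
have [c] := poly_rolle xy (etrans (eqP px) (esym (eqP py))).
rewrite in_itv /= => /andP[xc cy] p'c.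
have cs' : all (fun z => c < z) s'.
  by apply/allP => z /(allP ys'); apply: lt_trans.
exists (c :: s'); first by rewrite /= sz'.
split=> /=; last by rewrite /root p'c eqxx.
- by rewrite path_sortedE ?so' ?cs' //; apply: lt_trans.
- by rewrite xc; apply/allP => z /(allP cs'); apply: lt_trans.
Qed.

Lemma deriv_eq0_root p x : p^`() = 0 -> root p x -> p = 0.
Proof.
move=> p'0 px; have : (size p <= 1)%N.
  by have := size_deriv p; rewrite p'0 size_poly0; case: (size p) => [|[]].
move=> /size1_polyC pC; move: px; rewrite pC rootC => /eqP->.
by rewrite polyC0.
Qed.

Lemma sparse_poly_pos_roots l s :
  uniq (map snd l) -> sparse_poly l != 0 ->
  sorted <%R s -> all (fun z => 0 < z) s -> all (root (sparse_poly l)) s ->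
  (size s < size l)%N.
Proof.
have [n] := ubnP (size l); elim: n l s => // n IH l s /ltnSE szl ul lnz.
have l_neq0 : l != [::] by apply: contraNneq lnz => ->; rewrite /sparse_poly big_nil.
case: s => [|x s] so pos rts; first by rewrite lt0n size_eq0.
have [b lb] : exists b, b \in map snd l.
  by case: (l) l_neq0 => // c l' _; exists c.2; apply: mem_head.
have [a la amin] := ex_minnP (ex_intro (fun b => b \in map snd l) b lb).
have la_le : all (fun c => a <= c.2)%N l.
  by apply/allP => c cl; apply/amin/map_f.
(* Dividing by 'X^a, a the lowest exponent, keeps the positive roots and makes
   the constant term nonzero, so the derivative has one monomial fewer. *)
pose l1 := sparse_shift a l; pose l' := sparse_deriv l1.
have ul1 : uniq (map snd l1) by apply: uniq_sparse_shift.
have l1_0 : 0%N \in map snd l1.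
  case/mapP: la => c cl ac; apply/mapP; exists (c.1, c.2 - a)%N => /=.
    exact: (map_f (fun c => (c.1, c.2 - a)%N) cl).
  by rewrite ac subnn.
have eP : sparse_poly l = 'X^a * sparse_poly l1 := sparse_poly_shift la_le.
have l1_neq0 : sparse_poly l1 != 0.
  by apply: contraNneq lnz; rewrite eP => ->; rewrite mulr0.
have l1_roots : all (root (sparse_poly l1)) (x :: s).
  apply/allP => z zs; have := allP rts z zs; rewrite /root eP hornerM hornerXn.
  by rewrite mulf_eq0 expf_eq0 (gt_eqF (allP pos z zs)) andbF.
have [s' sz' [so' xs' rs']] := poly_rolle_sorted so l1_roots.
have szl' : size l' = (size l).-1 by rewrite size_sparse_deriv // size_map.
have l_gt0 : (0 < size l)%N by rewrite lt0n size_eq0.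
suff : (size s' < size l')%N by rewrite sz' szl'; case: (size l) l_gt0.
apply: IH; rewrite -?deriv_sparse_poly ?uniq_sparse_deriv //.
- by rewrite szl'; case: (size l) szl l_gt0.
- apply: contra_neq l1_neq0 => l1'0; apply: deriv_eq0_root l1'0 _.
  exact: (allP l1_roots x (mem_head _ _)).
- have x_gt0 : 0 < x by case/andP: pos.
  by apply/allP => z /(allP xs'); apply: lt_trans.
Qed.

Lemma gvandermonde_det_neq0 k (w : 'I_k -> R) (b : 'I_k -> nat) :
  (forall i, 0 < w i) -> injective w -> injective b ->
  \det (gvandermonde w b) != 0.
Proof.
move=> w_gt0 winj binj; apply/negP => /det0P [c cnz cV].
pose l := [seq (c 0 a, b a) | a <- enum 'I_k].
have el : sparse_poly l = \sum_a c 0 a *: 'X^(b a).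
  by rewrite /sparse_poly big_map big_enum.
have ul : uniq (map snd l) by rewrite -map_comp map_inj_uniq ?enum_uniq.
have lnz : sparse_poly l != 0.
  have [a ca] : exists a, c 0 a != 0.
    apply/existsP; apply: contraNT cnz; rewrite negb_exists => /forallP c0.
    by apply/eqP/rowP => a; rewrite mxE; apply/eqP/negPn.
  apply: contraNneq ca => l0; have := congr1 (fun q : {poly R} => q`_(b a)) l0.
  rewrite el coef0 coef_sumMXn => <-; rewrite (big_pred1 a) // => a'.
  by rewrite (inj_eq binj).
pose s := sort <=%O [seq w i | i <- enum 'I_k].
suff : (size s < size l)%N by rewrite size_sort !size_map ltnn.
apply: sparse_poly_pos_roots => //.
- rewrite lt_sorted_uniq_le sort_uniq sort_le_sorted andbT.
  by rewrite map_inj_uniq ?enum_uniq.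
- by apply/allP => z; rewrite mem_sort => /mapP[i _ ->].
apply/allP => z; rewrite mem_sort => /mapP[i _ ->].
rewrite /root el horner_sum; have := congr1 (fun M : 'rV[R]_k => M 0 i) cV.
rewrite /= !mxE => cVi; rewrite -[X in _ == X]cVi.
by apply/eqP/eq_bigr => a _; rewrite hornerZ hornerXn mxE.
Qed.

End SparsePoly.

Section Multinomial.
Variables (d t : nat).

Definition word_exponent (f : {ffun 'I_t -> 'I_d}) : {ffun 'I_d -> 'I_t.+1} :=
  [ffun i => inord #|[set k | f k == i]|].

Lemma word_exponentE f i : word_exponent f i = #|[set k | f k == i]| :> nat.
Proof. by rewrite ffunE inordK // ltnS (leq_trans (max_card _)) ?card_ord. Qed.

Lemma sum_word_exponent f : (\sum_i (word_exponent f i : nat))%N = t.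
Proof.
under eq_bigr => i _ do rewrite word_exponentE -sum1_card.
rewrite -[RHS]card_ord -sum1_card (partition_big (fun k => f k) xpredT) //.
by apply: eq_bigr => i _; apply: eq_bigl => k; rewrite inE.
Qed.

Lemma monom_word_exponent (R : comNzRingType) f (x : 'I_d -> R) :
  monom (word_exponent f) x = \prod_k x (f k).
Proof.
rewrite [RHS](partition_big (fun k => f k) xpredT) //; apply: eq_bigr => i _.
rewrite word_exponentE -prodr_const; apply: eq_big => [k|k]; first by rewrite inE.
by rewrite inE => /eqP->.
Qed.

Definition linpow_coef {R : comNzRingType} (a : 'I_d -> R)
    (e : {ffun 'I_d -> 'I_t.+1}) : R :=
  \sum_(f : {ffun 'I_t -> 'I_d} | word_exponent f == e) \prod_k a (f k).

Lemma linpow_expand (R : comNzRingType) (a x : 'I_d -> R) :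
  (\sum_i a i * x i) ^+ t =
  \sum_(e : {ffun 'I_d -> 'I_t.+1} | (\sum_i (e i : nat) == t)%N)
    linpow_coef a e * monom e x.
Proof.
rewrite -[t in LHS]card_ord -prodr_const bigA_distr_bigA /=.
rewrite (partition_big word_exponent
  (fun e : {ffun 'I_d -> 'I_t.+1} => \sum_i (e i : nat) == t)%N); last first.
  by move=> f _; rewrite sum_word_exponent.
apply: eq_bigr => e _; rewrite mulr_suml; apply: eq_bigr => f /eqP <-.
by rewrite monom_word_exponent big_split.
Qed.

End Multinomial.
Arguments word_exponent {d t}.
Arguments linpow_coef {d t R}.

Lemma Qpow_inHom (R : comNzRingType) m d t (V : 'M[R]_(m, d)) S :
  inHom t (Qpow t V S).
Proof. by exists (linpow_coef (Qentry V S)) => x; rewrite /Qpow linpow_expand. Qed.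

Lemma sum_count_mem (T : finType) (r : seq T) :
  (\sum_(i : T) count_mem i r)%N = size r.
Proof.
elim: r => [|a r IH] /=; first by rewrite big1.
rewrite big_split /= IH (bigD1 a) //= eqxx big1 // => i /negbTE.
by rewrite eq_sym => ->.
Qed.

Section DegreeExponents.
Variables (n t : nat).

Definition tuple_exponent (s : t.-tuple 'I_n.+1) : {ffun 'I_n.+1 -> 'I_t.+1} :=
  [ffun i => inord (count_mem i s)].

Lemma tuple_exponentE s i : tuple_exponent s i = count_mem i s :> nat.
Proof. by rewrite ffunE inordK // ltnS (leq_trans (count_size _ _)) ?size_tuple. Qed.

(* Every exponent vector of degree t comes from the sorted word listing each
   variable i with multiplicity e i. *)
Lemma degree_exponents_image :
  [set e : {ffun 'I_n.+1 -> 'I_t.+1} | \sum_i (e i : nat) == t]%N =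
  tuple_exponent @: [set s : t.-tuple 'I_n.+1 | sorted leq (map val s)].
Proof.
apply/setP => e; rewrite inE; apply/idP/imsetP => [/eqP e_t|[s _ ->]]; last first.
  rewrite -[X in _ == X](size_tuple s) -sum_count_mem.
  by apply/eqP/eq_bigr => i _; rewrite tuple_exponentE.
pose s := sort (relpre val leq) (flatten [seq nseq (e i) i | i <- enum 'I_n.+1]).
have count_s i : count_mem i s = e i.
  rewrite (permP (permEl (perm_sort _ _))) count_flatten -map_comp sumnE big_map.
  rewrite big_enum /= (bigD1 i) //= count_nseq /= eqxx mul1n big1 ?addn0 //.
  by move=> j /negbTE; rewrite count_nseq /= eq_sym => ->.
have size_s : size s == t.
  by rewrite -sum_count_mem -e_t; apply/eqP/eq_bigr => i _; rewrite count_s.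
exists (Tuple size_s).
  by rewrite inE /= sorted_map; apply: sort_sorted => a b; apply: leq_total.
by apply/ffunP => i; apply/val_inj => /=; rewrite tuple_exponentE count_s.
Qed.

Lemma card_degree_exponents :
  #|[set e : {ffun 'I_n.+1 -> 'I_t.+1} | \sum_i (e i : nat) == t]%N| = 'C(t + n, t).
Proof.
rewrite -card_sorted_tuples degree_exponents_image card_in_imset // => s1 s2.
rewrite !inE => so1 so2 e12; apply/val_inj/(inj_map val_inj).
apply: (sorted_eq leq_trans anti_leq) => //; apply: perm_map.
by apply/allP => x _; apply/eqP; rewrite -!tuple_exponentE e12.
Qed.

End DegreeExponents.

Section FreeFamilySpans.
Variables (R : fieldType) (X : Type) (I J : finType) (A : {set I}) (B : {set J}).
Variables (F : I -> X -> R) (G : J -> X -> R) (M : I -> J -> R).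
Hypothesis cardAB : #|A| = #|B|.
Hypothesis F_in_spanG : forall a x, a \in A -> F a x = \sum_(b in B) M a b * G b x.
Hypothesis F_free : forall c : I -> R,
  (forall x, \sum_(a in A) c a * F a x = 0) -> forall a, a \in A -> c a = 0.

Let Mx : 'M[R]_(#|A|, #|B|) := \matrix_(a, b) M (enum_val a) (enum_val b).

Let coef_of_row (z : 'rV[R]_#|A|) (a : I) := \sum_(i | enum_val i == a) z 0 i.

Let coef_of_rowE z i : coef_of_row z (enum_val i) = z 0 i.
Proof.
by rewrite /coef_of_row (big_pred1 i) // => i'; rewrite (inj_eq enum_val_inj).
Qed.

Let comb_coef_of_row z x :
  \sum_(a in A) coef_of_row z a * F a x =
  \sum_(j < #|B|) (z *m Mx) 0 j * G (enum_val j) x.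
Proof.
rewrite big_enum_val; under eq_bigr => i _ do
  rewrite coef_of_rowE F_in_spanG ?enum_valP // big_enum_val mulr_sumr.
rewrite exchange_big; apply: eq_bigr => j _; rewrite mxE mulr_suml.
by apply: eq_bigr => i _; rewrite mxE mulrA.
Qed.

Let Mx_row_full : row_full Mx.
Proof.
suff /eqP Mx_free : row_free Mx by rewrite /row_full Mx_free cardAB.
rewrite -kermx_eq0; apply/eqP/row_matrixP => r; rewrite row0.
set z := row r (kermx Mx); have zMx : z *m Mx = 0 by apply/sub_kermxP/row_sub.
apply/rowP => i; rewrite [RHS]mxE -coef_of_rowE; apply: F_free (enum_valP i) => x.
by rewrite comb_coef_of_row zMx big1 // => j _; rewrite mxE mul0r.
Qed.

Lemma free_family_spans (cg : J -> R) : exists cf : I -> R,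
  forall x, \sum_(b in B) cg b * G b x = \sum_(a in A) cf a * F a x.
Proof.
have [N NMx] := row_fullP Mx_row_full.
pose u : 'rV[R]_#|B| := \row_j cg (enum_val j).
exists (coef_of_row (u *m N)) => x.
rewrite comb_coef_of_row -mulmxA NMx mulmx1 big_enum_val.
by apply: eq_bigr => j _; rewrite mxE.
Qed.

End FreeFamilySpans.

Section FiniteDifference.
Variables (R : comNzRingType) (d : nat).
Implicit Types (ws : seq ('I_d -> R)) (f g : ('I_d -> R) -> R).

(* [fdiff [:: w_1; ...; w_n] f] is the iterated difference
   (D_(w_1) ... D_(w_n) f)(0), where (D_w f)(x) = f (x + w) - f x. *)
Fixpoint fdiff ws f : R :=
  if ws is w :: ws' then fdiff ws' (fun x => f (fun i => x i + w i)) - fdiff ws' f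
  else f (fun _ => 0).

Lemma eq_fdiff ws f g : f =1 g -> fdiff ws f = fdiff ws g.
Proof.
elim: ws f g => [|w ws IH] f g fg /=; first exact: fg.
by rewrite (IH f g) // (IH _ (fun x => g (fun i => x i + w i))).
Qed.

Lemma fdiff0 ws : fdiff ws (fun _ => 0) = 0.
Proof. by elim: ws => //= w ws ->; rewrite subr0. Qed.

Lemma fdiff_sum ws (K : Type) (r : seq K) (P : pred K) (c : K -> R)
    (F : K -> ('I_d -> R) -> R) :
  fdiff ws (fun x => \sum_(k <- r | P k) c k * F k x) =
  \sum_(k <- r | P k) c k * fdiff ws (F k).
Proof.
elim: ws F => [|w ws IH] F //=.
rewrite (IH (fun k x => F k (fun i => x i + w i))) IH -sumrB.
by apply: eq_bigr => k _; rewrite mulrBr.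
Qed.

Lemma fdiff_additive_pow (l : ('I_d -> R) -> R) ws N :
  (forall x y, l (fun i => x i + y i) = l x + l y) -> (N <= size ws)%N ->
  fdiff ws (fun x => l x ^+ N) =
  if N == size ws then (size ws)`!%:R * \prod_(w <- ws) l w else 0.
Proof.
move=> l_add; elim: ws N => [|w ws IH] N /=.
  by rewrite leqn0 => /eqP->; rewrite expr0 big_nil mulr1.
move=> N_le.
rewrite (eq_fdiff ws _
  (fun x => \sum_(i < N.+1) (l w ^+ (N - i) *+ 'C(N, i)) * l x ^+ i)); last first.
  by move=> x; rewrite l_add addrC exprDn; apply: eq_bigr => i _; rewrite mulrnAl.
rewrite fdiff_sum big_ord_recr /= subnn expr0 binn mulr1n mul1r addrK.
have IHi (i : 'I_N) : fdiff ws (fun x => l x ^+ i) =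
    if i == size ws :> nat then (size ws)`!%:R * \prod_(w <- ws) l w else 0.
  by apply: IH; rewrite -ltnS (leq_trans (ltn_ord i)).
under eq_bigr => i _ do rewrite IHi.
have [N_lt | N_ge] := ltnP N (size ws).+1.
  rewrite (ltn_eqF N_lt) big1 // => i _.
  by rewrite (ltn_eqF (leq_trans (ltn_ord i) N_lt)) mulr0.
have -> : N = (size ws).+1 by apply/eqP; rewrite eqn_leq N_le N_ge.
rewrite eqxx big_ord_recr /= eqxx big1 ?add0r; last first.
  by move=> i _; rewrite (ltn_eqF (ltn_ord i)) mulr0.
rewrite subSnn expr1 binSn factS natrM big_cons -mulr_natl.
ring.
Qed.

End FiniteDifference.
Arguments fdiff {R d}.

Section QentryLaplace.
Variables (R : comNzRingType) (m k : nat) (V : 'M[R]_(m, k.+2)).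
Implicit Types (S : {set 'I_m}) (j : 'I_m).

(* For #|S| = k.+1: the elements of S in increasing order, then j. *)
Definition enum_pad S j (a : 'I_k.+2) : 'I_m := nth j (enum S) a.

Lemma enum_pad_last S j : #|S| = k.+1 -> enum_pad S j ord_max = j.
Proof. by move=> cardS; rewrite /enum_pad nth_default // -cardE cardS. Qed.

Lemma enum_pad_inj S j : #|S| = k.+1 -> j \notin S -> injective (enum_pad S j).
Proof.
move=> cardS jS a b; rewrite /enum_pad.
have size_S : size (enum S) = k.+1 by rewrite -cardE.
have [a_lt|a_ge] := ltnP a k.+1; have [b_lt|b_ge] := ltnP b k.+1.
- by move/eqP; rewrite nth_uniq ?size_S ?enum_uniq // => /eqP/val_inj.
- rewrite [nth j _ b]nth_default ?size_S // => ja.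
  by move: jS; rewrite -ja -mem_enum mem_nth ?size_S.
- rewrite [nth j _ a]nth_default ?size_S // => jb.
  by move: jS; rewrite jb -mem_enum mem_nth ?size_S.
- by move=> _; apply: val_inj => /=; have := ltn_ord a; have := ltn_ord b; lia.
Qed.

Lemma det_enum_pad_mem S j : #|S| = k.+1 -> j \in S ->
  \det (rowsub (enum_pad S j) V) = 0.
Proof.
move=> cardS jS; have j_lt : (index j (enum S) < k.+1)%N.
  by rewrite -cardS cardE index_mem mem_enum.
apply: (@determinant_alternate _ _ _ (Ordinal (leqW j_lt)) ord_max).
  by rewrite -val_eqE /= neq_ltn j_lt.
by move=> i; rewrite !mxE enum_pad_last // /enum_pad nth_index ?mem_enum.
Qed.

(* Expansion along the last row, which is row j of V. *)
Lemma Qentry_laplace S j : #|S| = k.+1 ->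
  \sum_i Qentry V S i * ((-1) ^+ i * V j i) =
  (-1) ^+ k.+1 * \det (rowsub (enum_pad S j) V).
Proof.
move=> cardS; rewrite (expand_det_row _ ord_max) mulr_sumr; apply: eq_bigr => i _.
rewrite /cofactor !mxE enum_pad_last //.
have -> : row' ord_max (col' i (rowsub (enum_pad S j) V)) = sub_rows_cols V S i.
  apply/matrixP => a l; rewrite !mxE /enum_pad lift_max.
  by rewrite (nth_map j) // -cardE cardS.
have sign2 : (-1) ^+ k.+1 * (-1) ^+ k.+1 = 1 :> R.
  by rewrite -exprD addnn -signr_odd odd_double.
rewrite /Qentry /= exprD; transitivity ((-1) ^+ k.+1 * (-1) ^+ k.+1 *
  (\det (sub_rows_cols V S i) * ((-1) ^+ i * V j i))); first by rewrite sign2 mul1r.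
ring.
Qed.

End QentryLaplace.
Arguments enum_pad {m k}.

Section QpowBasis.
Variables (R : numFieldType) (m k t : nat) (V : 'M[R]_(m, k.+2)).
Hypothesis m_eq : m = (t + k.+1)%N.
Hypothesis minors_neq0 :
  forall r : 'I_k.+2 -> 'I_m, injective r -> \det (rowsub r V) != 0.

Let Qform (S : {set 'I_m}) (x : 'I_k.+2 -> R) := \sum_i Qentry V S i * x i.

Let signed_row j (i : 'I_k.+2) := (-1) ^+ i * V j i.

Let fdiff_Qpow (S T : {set 'I_m}) : #|S| = k.+1 -> #|T| = k.+1 ->
  fdiff [seq signed_row j | j <- enum (~: T)] (Qpow t V S) =
  t`!%:R * \prod_(j in ~: T) ((-1) ^+ k.+1 * \det (rowsub (enum_pad S j) V)).
Proof.
move=> cardS cardT; set ws := map _ _.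
have size_ws : size ws = t.
  have := cardsC T; rewrite cardT card_ord size_map -cardE.
  by move=> /(canRL (addKn _)) ->; rewrite m_eq addnK.
have Qform_add x y : Qform S (fun i => x i + y i) = Qform S x + Qform S y.
  by rewrite /Qform -big_split; apply: eq_bigr => i _; rewrite mulrDr.
rewrite (_ : Qpow t V S = fun x => Qform S x ^+ t) //.
rewrite fdiff_additive_pow ?size_ws // eqxx big_map big_enum.
by apply: congr1; apply: eq_bigr => j _; rewrite /Qform Qentry_laplace.
Qed.

Lemma Qpow_free (c : {set 'I_m} -> R) :
  (forall x, \sum_(S : {set 'I_m} | #|S| == k.+1) c S * Qpow t V S x = 0) ->
  forall T : {set 'I_m}, #|T| = k.+1 -> c T = 0.
Proof.
move=> c_rel T cardT.
have := @eq_fdiff _ _ [seq signed_row j | j <- enum (~: T)] _ (fun _ => 0) c_rel.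
rewrite fdiff0 fdiff_sum (bigD1 T) ?cardT //= big1 ?addr0; last first.
  move=> S /andP[/eqP cardS S_neqT]; rewrite fdiff_Qpow //.
  have /subsetPn[j jS jT] : ~~ (S \subset T).
    by apply: contra S_neqT => sST; rewrite eqEcard sST cardS cardT leqnn.
  by rewrite (bigD1 j) ?inE //= det_enum_pad_mem // !(mulr0, mul0r).
rewrite fdiff_Qpow // => /eqP; rewrite mulf_eq0 => /predU1P[//|].
apply: contraTeq => _; rewrite mulf_neq0 ?pnatr_eq0 -?lt0n ?fact_gt0 //.
apply/prodf_neq0 => j; rewrite in_setC => jT.
by rewrite mulf_neq0 ?signr_eq0 //; apply/minors_neq0/enum_pad_inj.
Qed.

Lemma Qpow_span (p : ('I_k.+2 -> R) -> R) : inHom t p ->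
  exists c : {set 'I_m} -> R,
    forall x, p x = \sum_(S : {set 'I_m} | #|S| == k.+1) c S * Qpow t V S x.
Proof.
case=> cp p_eq.
pose A := [set S : {set 'I_m} | #|S| == k.+1].
pose E := [set e : {ffun 'I_k.+2 -> 'I_t.+1} | \sum_i (e i : nat) == t]%N.
have cardAE : #|A| = #|E|.
  rewrite card_draws card_ord card_degree_exponents m_eq -{2}[k.+1](addKn t).
  by rewrite bin_sub ?leq_addr.
have [c c_eq] : exists c : {set 'I_m} -> R, forall x,
    \sum_(e in E) cp e * monom e x = \sum_(S in A) c S * Qpow t V S x.
  apply: (@free_family_spans R _ _ _ A E _ _
           (fun S => linpow_coef (Qentry V S)) cardAE).
    by move=> S x _; rewrite /Qpow linpow_expand; apply: eq_bigl => e; rewrite inE.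
  move=> c c_rel S; rewrite inE => /eqP; apply: Qpow_free => x.
  by rewrite -[RHS](c_rel x); apply: eq_bigl => S'; rewrite inE.
exists c => x; rewrite p_eq (eq_bigl [in E]) => [|e]; last by rewrite inE.
by rewrite c_eq; apply: eq_bigl => S; rewrite inE.
Qed.

End QpowBasis.

Lemma Qpow_basis (R : numFieldType) m k t (V : 'M[R]_(m, k.+2)) :
  m = (t + k.+1)%N ->
  (forall r : 'I_k.+2 -> 'I_m, injective r -> \det (rowsub r V) != 0) ->
  is_basis_Hom t k.+1 (fun S => Qpow t V S).
Proof.
move=> m_eq minors_neq0.
by split; [move=> S _; apply: Qpow_inHom | apply: Qpow_free | apply: Qpow_span].
Qed.

Theorem mainTheorem2 (R : rcfType) (d t : nat) (hd : (2 <= d)%N) (ht : (1 <= t)%N)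
  (v : 'I_d -> R) (alpha : 'I_(t + d - 1) -> nat)
  (hvpos : forall i, 0 < v i) (hvinj : injective v) (halpha : injective alpha) :
  is_basis_Hom t d.-1 (fun S => Qpow t (gvandermonde v alpha) S).
Proof.
case: d hd v alpha hvpos hvinj halpha => [|[|k]] // _ v alpha v_gt0 v_inj alpha_inj.
apply: Qpow_basis => [|r r_inj]; first by rewrite addnS subn1.
have -> : rowsub r (gvandermonde v alpha) = gvandermonde v (alpha \o r).
  by apply/matrixP => a i; rewrite !mxE.
exact/gvandermonde_det_neq0/inj_comp.
Qed.
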